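(* Let $d\ge1$ and let $h_1<h_2<\dots$ be a strictly increasing sequence of integers with $h_1\ge2$. Suppose that $L_d(h_1,h_2,\dots)$ and $L_d(h_1-1,h_2-1,h_3-1,\dots)$ are perfect lattices of minimum $4$, and that $L_{d+1}(h_1,h_2,\dots)\subset\mathbb Z^{d+3}$ contains a vector of norm $4$ whose first and last coordinates are both equal to $1$. Then $L_{d+1}(h_1,h_2,\dots)$ is perfect.
   Context: For a strictly increasing (finite or infinite, possibly empty) sequence of positive integers $h_1<h_2<\dots$ (called holes) and an integer $d\ge1$, let $s_1<s_2<\dots<s_{d+2}$ be the $d+2$ smallest elements of $\{1,2,3,\dots\}\setminus\{h_1,h_2,\dots\}$, and define $L_d(h_1,h_2,\dots)=\{x\in\mathbb Z^{d+2}:\ \sum_{i=1}^{d+2}x_i=0,\ \sum_{i=1}^{d+2}s_ix_i=0\}$ with the standard inner product of $\mathbb R^{d+2}$; it is an even integral lattice of rank $d$ with no vectors of norm $2$. Norm means squared Euclidean length; the minimum is the smallest norm of a nonzero element. A lattice $L$ of rank $n$ is perfect if $\{v\otimes v\}$, $v$ ranging over its minimal vectors, spans the $\binom{n+1}{2}$-dimensional space of symmetric tensors in $(L\otimes\mathbb R)\otimes(L\otimes\mathbb R)$. *)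

From HB Require Import structures.
From mathcomp Require Import all_boot all_order all_algebra.
Set Implicit Arguments. Unset Strict Implicit. Unset Printing Implicit Defensive.
Import Order.TTheory GRing.Theory Num.Theory.
Local Open Scope ring_scope.

(* The set of holes is a predicate [H] on positive integers (values of H at 0
   are irrelevant).  [nonholes H N] = elements of {1,...,N} that are not holes,
   in increasing order. *)
Definition nonholes (H : pred nat) (N : nat) : seq nat :=
  [seq n <- iota 1 N | ~~ H n].

(* s_{i+1} = nth 0 (nonholes H N) i  (meaningful when N is large enough that
   nonholes H N has at least d+2 elements). *)

Definition Ld (H : pred nat) (N d : nat) : 'rV[int]_(d.+2) -> Prop :=
  fun x => \sum_(i < d.+2) x 0 i = 0 /\
           \sum_(i < d.+2) ((nth 0%N (nonholes H N) i)%:Z * x 0 i) = 0.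

Arguments Ld H N d : clear implicits.

Definition shift_holes (H : pred nat) : pred nat := fun n => H n.+1.

Definition vnorm m (x : 'rV[int]_m) : int := \sum_(i < m) x 0 i ^+ 2.

Definition lat_min m (L : 'rV[int]_m -> Prop) (mu : int) : Prop :=
  (exists x, L x /\ x != 0 /\ vnorm x = mu) /\
  (forall x, L x -> x != 0 -> mu <= vnorm x).

Definition minvec m (L : 'rV[int]_m -> Prop) (x : 'rV[int]_m) : Prop :=
  L x /\ x != 0 /\ (forall y, L y -> y != 0 -> vnorm x <= vnorm y).

Definition toQ m (v : 'rV[int]_m) : 'rV[rat]_m := map_mx (fun z : int => z%:~R) v.

Definition in_span m (L : 'rV[int]_m -> Prop) (u : 'rV[rat]_m) : Prop :=
  exists (vs : seq 'rV[int]_m) (cs : seq rat),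
    (forall v, v \in vs -> L v) /\
    u = \sum_(i < size vs) cs`_i *: toQ vs`_i.

(* Symmetric tensors in (L⊗Q)⊗(L⊗Q), as symmetric m×m matrices whose rows
   (hence also columns) lie in L⊗Q. *)
Definition sym_tensor m (L : 'rV[int]_m -> Prop) (M : 'M[rat]_m) : Prop :=
  M^T = M /\ (forall i, in_span L (row i M)).

Definition perfect m (L : 'rV[int]_m -> Prop) : Prop :=
  forall M : 'M[rat]_m, sym_tensor L M ->
    exists (vs : seq 'rV[int]_m) (cs : seq rat),
      (forall v, v \in vs -> minvec L v) /\
      M = \sum_(i < size vs) cs`_i *: ((toQ vs`_i)^T *m toQ vs`_i).

(* A symmetric tensor of L_{d+1} is a symmetric matrix M whose rows lie in the
   kernel V of the forms sum x_i and sum s_i x_i.  Subtracting a multiple of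
   x (x) x, for the given norm-4 vector x with x_0 = x_last = 1, kills the corner
   entry M_{0,last}.  Since d >= 1, V contains a vector B with B_0 = 0 and
   B_last <> 0; with it the last row p of the remainder extends to a symmetric
   Q in V (x) V with last row p and first row 0.  Thus M = c x (x) x + P + Q,
   where P vanishes on the last row and column and Q on the first ones.
   Deleting these zero rows and columns turns P into a symmetric tensor of
   L_d(h) and Q into one of L_d(h-1) (whose weights s_{i+1} - 1 define the
   same lattice as s_{i+1}, because sum x_i = 0).  By perfection both are
   combinations of v (x) v over minimal vectors v of norm 4; padded by a zero
   coordinate, these v are vectors of norm 4 in L_{d+1}, hence minimal there:
   a nonzero vector of L_{d+1} has even norm, and norm 2 would force e_i - e_j,
   excluded as the s_i are distinct. *)

From HB Require Import structures.
From mathcomp Require Import all_boot all_order all_algebra.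
From mathcomp Require Import zify ring.
Set Implicit Arguments. Unset Strict Implicit. Unset Printing Implicit Defensive.
Import Order.TTheory GRing.Theory Num.Theory.
Local Open Scope ring_scope.

Definition wlat n (w : 'I_n -> int) (x : 'rV[int]_n) : Prop :=
  \sum_i x 0 i = 0 /\ \sum_i w i * x 0 i = 0.

Lemma dvd2_sqr_sub (z : int) : (2 %| z ^+ 2 - z)%Z.
Proof.
have r0 := modz_ge0 z (isT : 2 != 0 :> int).
have r2 := ltz_pmod z (isT : 0 < 2 :> int).
rewrite {1 2}(divz_eq z 2); set q := (z %/ 2)%Z; set r := (z %% 2)%Z in r0 r2 *.
apply/dvdzP; exists (q * (2 * q + 2 * r - 1)).
have [->|->] : r = 0 \/ r = 1 by lia.
all: ring.
Qed.

Lemma dvd2_vnorm n (y : 'rV[int]_n) : \sum_i y 0 i = 0 -> (2 %| vnorm y)%Z.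
Proof.
move=> sum0; rewrite -[vnorm y]subr0 -sum0 /vnorm -sumrB.
by apply: rpred_sum => i _; apply: dvd2_sqr_sub.
Qed.

Lemma exists_gt0_entry n (y : 'rV[int]_n) :
  \sum_i y 0 i = 0 -> y != 0 -> exists i, 0 < y 0 i.
Proof.
move=> sum0 /eqP y_neq0; case: (pickP (fun i => 0 < y 0 i)) => [i|le0].
  by exists i.
case: y_neq0; apply/rowP => i; rewrite mxE; apply/eqP; rewrite -oppr_eq0.
have nneg k : 0 <= - y 0 k by rewrite oppr_ge0 leNgt le0.
by rewrite (psumr_eq0P (P := predT) (fun k _ => nneg k)) // sumrN sum0 oppr0.
Qed.

Lemma vnorm_pairE n (y : 'rV[int]_n) i j : i != j ->
  vnorm y = y 0 i ^+ 2 + y 0 j ^+ 2 + \sum_(k | (k != i) && (k != j)) y 0 k ^+ 2.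
Proof.
move=> ij; rewrite /vnorm (bigD1 i) // (bigD1 j) 1?eq_sym //= addrA.
by congr (_ + _); apply: eq_bigl => k; rewrite andbC.
Qed.

(* Norms are even, and a vector of norm 2 is some [e_i - e_j], which pairs
   with the weights to [w i - w j <> 0]. *)
Lemma wlat_vnorm_ge4 n (w : 'I_n -> int) (y : 'rV[int]_n) :
  injective w -> wlat w y -> y != 0 -> 4 <= vnorm y.
Proof.
move=> w_inj [sum0 wsum0] y_neq0.
have [i yi_gt0] := exists_gt0_entry sum0 y_neq0.
have [j yj_lt0] : exists j, y 0 j < 0.
  have sumN0 : \sum_k (- y) 0 k = 0.
    by under eq_bigr do rewrite mxE; rewrite sumrN sum0 oppr0.
  have : - y != 0 by rewrite oppr_eq0.
  by case/(exists_gt0_entry sumN0) => j; rewrite mxE oppr_gt0; exists j.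
have ji : j != i by apply: contraTneq yi_gt0 => <-; rewrite -leNgt ltW.
have rest_ge0 : 0 <= \sum_(k | (k != j) && (k != i)) y 0 k ^+ 2.
  by apply: sumr_ge0 => k _; rewrite sqr_ge0.
have := dvd2_vnorm sum0; rewrite (vnorm_pairE y ji) => /dvdzP[m Em].
rewrite leNgt; apply/negP => lt4.
have [yj yi rest0] : [/\ y 0 j = -1, y 0 i = 1 &
    \sum_(k | (k != j) && (k != i)) y 0 k ^+ 2 = 0].
  by move: rest_ge0 Em lt4 yi_gt0 yj_lt0; rewrite !expr2 => *; split; nia.
have yk0 k : k != j -> k != i -> y 0 k = 0.
  move=> kj ki; apply/eqP; rewrite -sqrf_eq0; apply/eqP.
  by apply: (psumr_eq0P _ rest0) => [l _|]; [rewrite sqr_ge0 | rewrite kj ki].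
move: wsum0; rewrite (bigD1 j) // (bigD1 i) 1?eq_sym //= big1 => [|k /andP[kj ki]].
  rewrite yj yi addr0 mulrN1 mulr1 addrC => /eqP; rewrite subr_eq0 => /eqP/w_inj ij.
  by rewrite ij eqxx in ji.
by rewrite yk0 // mulr0.
Qed.

Definition wform n (w : 'I_n -> int) : 'M[rat]_(n, 2) :=
  \matrix_(i, k) if k == ord0 then 1 else (w i)%:~R.

Definition wspace n (w : 'I_n -> int) : 'M[rat]_n := kermx (wform w).

Lemma sub_wspaceP n (w : 'I_n -> int) (u : 'rV[rat]_n) :
  (u <= wspace w)%MS <-> \sum_i u 0 i = 0 /\ \sum_i (w i)%:~R * u 0 i = 0.
Proof.
have uwE k : (u *m wform w) 0 k = \sum_i u 0 i * (if k == ord0 then 1 else (w i)%:~R).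
  by rewrite mxE; apply: eq_bigr => i _; rewrite mxE.
split=> [/sub_kermxP uw0 | [sum0 wsum0]].
  move/rowP: uw0 => uw0; have := uw0 ord0; have := uw0 ord_max.
  rewrite !uwE !mxE /= => wsum0 sum0.
  split; [rewrite -[RHS]sum0 | rewrite -[RHS]wsum0];
    by apply: eq_bigr => i _; rewrite ?mulr1 // mulrC.
apply/sub_kermxP/rowP => k; rewrite uwE mxE.
case: eqVneq => _; first by under eq_bigr do rewrite mulr1.
by under eq_bigr do rewrite mulrC.
Qed.

Lemma wlat_toQ n (w : 'I_n -> int) (x : 'rV[int]_n) :
  wlat w x <-> (toQ x <= wspace w)%MS.
Proof.
rewrite sub_wspaceP /toQ; under [\sum_i _]eq_bigr do rewrite mxE.
under [\sum_i (_ * _)]eq_bigr do rewrite mxE -intrM.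
rewrite -!rmorph_sum /=; split=> [[-> ->] // | [s1 s2]].
by split; apply/eqP; rewrite -(intr_eq0 rat) ?s1 ?s2.
Qed.

Lemma toQ_int_multiple n (u : 'rV[rat]_n) :
  exists2 D : int, D != 0 & exists z : 'rV[int]_n, toQ z = D%:~R *: u.
Proof.
exists (\prod_j denq (u 0 j)); first by apply/prodf_neq0 => j _; apply: denq_neq0.
exists (\row_j (numq (u 0 j) * \prod_(k | k != j) denq (u 0 k))).
apply/rowP => j; rewrite !mxE [in RHS](bigD1 j) //= !intrM numqE.
by rewrite [RHS]mulrC mulrA.
Qed.

Lemma in_span_wlat n (w : 'I_n -> int) (u : 'rV[rat]_n) :
  in_span (wlat w) u <-> (u <= wspace w)%MS.
Proof.
split=> [[vs [cs [vs_in ->]]] | u_in].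
  apply: summx_sub => i _; apply/scalemx_sub/wlat_toQ/vs_in/mem_nth.
  exact: ltn_ord.
have [D D_neq0 [z zE]] := toQ_int_multiple u.
exists [:: z], [:: D%:~R^-1]; split.
  by move=> v; rewrite inE => /eqP ->; apply/wlat_toQ; rewrite zE scalemx_sub.
by rewrite big_ord1 /= zE scalerA mulVf ?scale1r // intr_eq0.
Qed.

Lemma sym_tensor_wlatP n (w : 'I_n -> int) (M : 'M[rat]_n) :
  sym_tensor (wlat w) M <-> M^T = M /\ (M <= wspace w)%MS.
Proof.
rewrite /sym_tensor; split=> -[MT rowsM]; split=> //.
  by apply/row_subP => i; apply/in_span_wlat.
by move=> i; apply/in_span_wlat; apply: submx_trans rowsM; apply: row_sub.
Qed.

Lemma wspace_shift n (w w' : 'I_n -> int) (c : int) (u : 'rV[rat]_n) :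
  (forall i, w i = w' i + c) -> (u <= wspace w)%MS <-> (u <= wspace w')%MS.
Proof.
move=> wE; rewrite !sub_wspaceP.
have -> : \sum_i (w i)%:~R * u 0 i = \sum_i (w' i)%:~R * u 0 i + c%:~R * \sum_i u 0 i.
  rewrite mulr_sumr -big_split /=; apply: eq_bigr => i _.
  by rewrite wE intrD mulrDl.
by split=> -[s0 ws0]; split=> //; move: ws0; rewrite s0 mulr0 addr0.
Qed.

Definition ins0 (R : nmodType) n (h : 'I_n.+1) (v : 'rV[R]_n) : 'rV[R]_n.+1 :=
  \row_j oapp (v 0) 0 (unlift h j).

Section InsertZero.
Variables (R : nmodType) (n : nat) (h : 'I_n.+1).
Implicit Types (v : 'rV[R]_n) (u : 'rV[R]_n.+1).

Lemma ins0_lift v i : ins0 h v 0 (lift h i) = v 0 i.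
Proof. by rewrite mxE liftK. Qed.

Lemma ins0_at v : ins0 h v 0 h = 0.
Proof. by rewrite mxE unlift_none. Qed.

Lemma big_ins0 (R' : nmodType) (F : 'I_n.+1 -> R -> R') v :
  (forall j, F j 0 = 0) -> \sum_j F j (ins0 h v 0 j) = \sum_i F (lift h i) (v 0 i).
Proof.
move=> F0; rewrite (bigD1_ord h) //= ins0_at F0 add0r.
by apply: eq_bigr => i _; rewrite ins0_lift.
Qed.

Lemma ins0_col' u : u 0 h = 0 -> ins0 h (col' h u) = u.
Proof.
move=> uh0; apply/rowP => j; rewrite mxE.
by case: unliftP => [i ->|->] /=; rewrite ?mxE ?uh0.
Qed.

End InsertZero.

Lemma toQ_ins0 n (h : 'I_n.+1) (v : 'rV[int]_n) : toQ (ins0 h v) = ins0 h (toQ v).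
Proof. by apply/rowP => j; rewrite !mxE; case: unlift => [i|] //=; rewrite mxE. Qed.

Lemma vnorm_ins0 n (h : 'I_n.+1) (v : 'rV[int]_n) : vnorm (ins0 h v) = vnorm v.
Proof. by rewrite /vnorm (@big_ins0 _ _ h _ (fun _ a => a ^+ 2)) // => j; rewrite expr0n. Qed.

Lemma wspace_ins0 n (w : 'I_n.+1 -> int) (h : 'I_n.+1) (u : 'rV[rat]_n) :
  (ins0 h u <= wspace w)%MS <-> (u <= wspace (w \o lift h))%MS.
Proof.
rewrite !sub_wspaceP (@big_ins0 _ _ h _ (fun _ a => a)) //.
by rewrite (@big_ins0 _ _ h _ (fun j a => (w j)%:~R * a)) // => j; rewrite mulr0.
Qed.

Lemma wspace_compress n (w : 'I_n.+1 -> int) (h : 'I_n.+1) (P : 'M[rat]_n.+1) :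
  (P <= wspace w)%MS -> col h P = 0 -> (row' h (col' h P) <= wspace (w \o lift h))%MS.
Proof.
move=> /row_subP P_in Ph0; apply/row_subP => i.
have -> : row i (row' h (col' h P)) = col' h (row (lift h i) P).
  by apply/rowP => j; rewrite !mxE.
apply/wspace_ins0; rewrite ins0_col' ?P_in //.
by move/colP: Ph0 => /(_ (lift h i)); rewrite !mxE.
Qed.

Lemma row_outer (F : comNzRingType) m (u v : 'rV[F]_m) i : row i (u^T *m v) = u 0 i *: v.
Proof. by apply/rowP => j; rewrite !mxE big_ord1 !mxE. Qed.

(* The symmetric matrix in span(B, p) (x) span(B, p) whose row [b] is [p]. *)
Definition sym_ext (F : fieldType) m (b : 'I_m) (B p : 'rV[F]_m) : 'M[F]_m :=
  (B 0 b)^-1 *: (B^T *m p + p^T *m B) - (p 0 b / B 0 b ^+ 2) *: (B^T *m B).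

Section SymmetricExtension.
Variables (F : fieldType) (m : nat) (b : 'I_m) (B p : 'rV[F]_m).

Lemma tr_sym_ext : (sym_ext b B p)^T = sym_ext b B p.
Proof.
by rewrite /sym_ext linearB !linearZ /= linearD /= !trmx_mul !trmxK [p^T *m B + _]addrC.
Qed.

Lemma sym_ext_sub r (U : 'M_(r, m)) :
  (B <= U)%MS -> (p <= U)%MS -> (sym_ext b B p <= U)%MS.
Proof.
by move=> BU pU; rewrite addmx_sub ?eqmx_opp ?scalemx_sub ?addmx_sub ?mulmx_sub.
Qed.

Lemma row_sym_ext : B 0 b != 0 -> row b (sym_ext b B p) = p.
Proof.
move=> Bb_neq0; rewrite linearB !linearZ linearD /= !row_outer.
by apply/rowP => j; rewrite !mxE; field.
Qed.

Lemma row_sym_ext_eq0 a : B 0 a = 0 -> p 0 a = 0 -> row a (sym_ext b B p) = 0.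
Proof.
move=> Ba0 pa0; rewrite linearB !linearZ linearD /= !row_outer Ba0 pa0.
by rewrite !scale0r addr0 oppr0 !scaler0 addr0.
Qed.

End SymmetricExtension.

Lemma sym_split (F : fieldType) m r (U : 'M[F]_(r, m)) (M : 'M[F]_m)
    (x B : 'rV[F]_m) (a b : 'I_m) :
  M^T = M -> (M <= U)%MS -> (x <= U)%MS -> (B <= U)%MS ->
  x 0 a * x 0 b != 0 -> B 0 a = 0 -> B 0 b != 0 ->
  exists c (P Q : 'M[F]_m), M = c *: (x^T *m x) + P + Q /\
    [/\ P^T = P, (P <= U)%MS & row b P = 0] /\ [/\ Q^T = Q, (Q <= U)%MS & row a Q = 0].
Proof.
move=> MT MU xU BU xab_neq0 Ba0 Bb_neq0.
set c := M a b / (x 0 a * x 0 b); set M1 := M - c *: (x^T *m x).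
set Q := sym_ext b B (row b M1).
have M1T : M1^T = M1 by rewrite linearB linearZ /= trmx_mul trmxK MT.
have M1U : (M1 <= U)%MS by rewrite addmx_sub ?eqmx_opp ?scalemx_sub ?mulmx_sub.
have M1ab : M1 a b = 0.
  by rewrite !mxE big_ord1 !mxE /c divfK ?subrr.
have QU : (Q <= U)%MS by rewrite sym_ext_sub // (submx_trans (row_sub _ _)).
exists c, (M1 - Q), Q; split; first by rewrite -addrA subrK addrC subrK.
split; split; rewrite ?tr_sym_ext //.
- by rewrite linearB /= tr_sym_ext M1T.
- by rewrite addmx_sub ?eqmx_opp.
- by rewrite linearB /= row_sym_ext // subrr.
- by rewrite row_sym_ext_eq0 // mxE -[M1]M1T mxE.
Qed.

Definition outer m (v : 'rV[int]_m) : 'M[rat]_m := (toQ v)^T *m toQ v.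

Lemma outerE m (v : 'rV[int]_m) i j : outer v i j = (v 0 i * v 0 j)%:~R.
Proof. by rewrite !mxE big_ord1 !mxE intrM. Qed.

Definition mintensor_span m (L : 'rV[int]_m -> Prop) (M : 'M[rat]_m) : Prop :=
  exists vs cs, (forall v, v \in vs -> minvec L v) /\
    M = \sum_(i < size vs) cs`_i *: outer vs`_i.

Section MinimalTensorSpan.
Variables (m : nat) (L : 'rV[int]_m -> Prop).

Lemma mintensor_span_cons c v M :
  minvec L v -> mintensor_span L M -> mintensor_span L (c *: outer v + M).
Proof.
move=> v_min [vs [cs [vs_min ->]]]; exists (v :: vs), (c :: cs); split.
  by move=> u; rewrite inE => /orP[/eqP->|/vs_min].
by rewrite big_ord_recl.
Qed.

Lemma mintensor_spanD M1 M2 :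
  mintensor_span L M1 -> mintensor_span L M2 -> mintensor_span L (M1 + M2).
Proof.
move=> [vs [cs [vs_min ->]]] span_M2.
elim: vs cs vs_min => [|v vs IHvs] cs vs_min; first by rewrite big_ord0 add0r.
rewrite big_ord_recl -addrA; apply: mintensor_span_cons; first exact/vs_min/mem_head.
under eq_bigr do rewrite lift0 -nth_behead.
by apply: IHvs => u u_in; apply: vs_min; rewrite inE u_in orbT.
Qed.

Lemma minvec_vnorm4 v :
  (forall y, L y -> y != 0 -> 4 <= vnorm y) -> L v -> vnorm v = 4 -> minvec L v.
Proof.
move=> ge4 Lv nv; have v_neq0 : v != 0.
  by apply: contra_eqN nv => /eqP->; rewrite /vnorm big1 // => i _; rewrite mxE expr0n.
by split=> //; split=> // y Ly /(ge4 _ Ly); rewrite nv.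
Qed.

Lemma vnorm_minvec v : lat_min L 4 -> minvec L v -> vnorm v = 4.
Proof.
move=> [[y [Ly [y_neq0 ny]]] ge4] [Lv [v_neq0 v_le]].
by apply/eqP; rewrite eq_le -{1}ny v_le ?ge4.
Qed.

End MinimalTensorSpan.

Lemma mintensor_span_ins0 n (h : 'I_n.+1) (L : 'rV[int]_n.+1 -> Prop)
    (L' : 'rV[int]_n -> Prop) (P : 'M[rat]_n.+1) :
  (forall v, minvec L' v -> minvec L (ins0 h v)) -> P^T = P -> row h P = 0 ->
  mintensor_span L' (row' h (col' h P)) -> mintensor_span L P.
Proof.
move=> ins0_min PT Ph0 [vs [cs [vs_min P'E]]].
exists (map (ins0 h) vs), cs; split.
  by move=> _ /mapP[v v_in ->]; apply/ins0_min/vs_min.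
have Ph j : P h j = 0 by move/rowP: Ph0 => /(_ j); rewrite !mxE.
rewrite size_map; apply/matrixP => i j; rewrite summxE.
under eq_bigr => k _ do rewrite (nth_map 0) // mxE outerE.
case: (unliftP h i) => [i' ->|->]; last first.
  by rewrite Ph big1 // => k _; rewrite ins0_at mul0r mulr0.
case: (unliftP h j) => [j' ->|->]; last first.
  by rewrite -[P]PT mxE Ph big1 // => k _; rewrite ins0_at mulr0 mulr0.
move/matrixP: P'E => /(_ i' j'); rewrite !mxE summxE => ->.
by apply: eq_bigr => k _; rewrite mxE outerE !ins0_lift.
Qed.

Section Compression.
Variables (n : nat) (h : 'I_n.+1) (w : 'I_n.+1 -> int) (w' : 'I_n -> int) (c : int).
Hypotheses (w_inj : injective w) (wE : forall i, w (lift h i) = w' i + c).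

Lemma minvec_ins0 v :
  lat_min (wlat w') 4 -> minvec (wlat w') v -> minvec (wlat w) (ins0 h v).
Proof.
move=> min' v_min; apply: minvec_vnorm4 => [y||].
- exact: wlat_vnorm_ge4.
- apply/wlat_toQ; rewrite toQ_ins0; apply/wspace_ins0/(wspace_shift _ wE)/wlat_toQ.
  by case: v_min.
- by rewrite vnorm_ins0 (vnorm_minvec min' v_min).
Qed.

Lemma mintensor_span_compress (P : 'M[rat]_n.+1) :
  perfect (wlat w') -> lat_min (wlat w') 4 ->
  P^T = P -> (P <= wspace w)%MS -> row h P = 0 -> mintensor_span (wlat w) P.
Proof.
move=> perf' min' PT PU Ph0.
apply: (mintensor_span_ins0 _ PT Ph0) => [v|]; first exact: minvec_ins0.
apply/perf'/sym_tensor_wlatP; split.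
  by apply/matrixP => i j; rewrite !mxE -{1}PT mxE.
have Pcol : col h P = 0 by rewrite -[P]PT -tr_row Ph0 trmx0.
have /row_subP P'U := wspace_compress PU Pcol.
by apply/row_subP => i; apply/(wspace_shift _ wE)/P'U.
Qed.

End Compression.

Definition tri_vec n (w : 'I_n -> int) (i j k : 'I_n) : 'rV[rat]_n :=
  ((w k)%:~R - (w j)%:~R) *: delta_mx 0 i + ((w i)%:~R - (w k)%:~R) *: delta_mx 0 j
  + ((w j)%:~R - (w i)%:~R) *: delta_mx 0 k.

Section TriVector.
Variables (n : nat) (w : 'I_n -> int) (i j k : 'I_n).

Lemma tri_vec_sub : (tri_vec w i j k <= wspace w)%MS.
Proof.
apply/sub_kermxP; rewrite !mulmxDl -!scalemxAl -!rowE.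
by apply/rowP => l; rewrite !mxE; case: eqVneq => _; ring.
Qed.

Lemma tri_vec_out l : l != i -> l != j -> l != k -> tri_vec w i j k 0 l = 0.
Proof.
by move=> /negPf li /negPf lj /negPf lk; rewrite !mxE li lj lk !andbF !mulr0 !addr0.
Qed.

Lemma tri_vec_at : k != i -> k != j -> tri_vec w i j k 0 k = (w j)%:~R - (w i)%:~R.
Proof.
by move=> /negPf ki /negPf kj; rewrite !mxE ki kj !eqxx !andbF !mulr0 !add0r mulr1.
Qed.

End TriVector.

Lemma exists_wspace_head0 d (w : 'I_d.+3 -> int) : (0 < d)%N -> injective w ->
  exists2 B : 'rV[rat]_d.+3, (B <= wspace w)%MS & B 0 ord0 = 0 /\ B 0 ord_max != 0.
Proof.
move=> d_gt0 w_inj; pose i1 : 'I_d.+3 := inord 1; pose i2 : 'I_d.+3 := inord 2.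
have val_i1 : i1 = 1%N :> nat by rewrite inordK.
have val_i2 : i2 = 2%N :> nat by rewrite inordK // !ltnS.
exists (tri_vec w i1 i2 ord_max); first exact: tri_vec_sub.
split; first by apply: tri_vec_out; rewrite -val_eqE /= ?val_i1 ?val_i2.
rewrite tri_vec_at ?subr_eq0 ?eqr_int ?(inj_eq w_inj) -val_eqE /= ?val_i1 ?val_i2 //.
by rewrite !eqSS -lt0n.
Qed.

Definition hole_weight (H : pred nat) (N n : nat) (i : 'I_n) : int :=
  (nth 0%N (nonholes H N) i)%:Z.
Arguments hole_weight H N n i : clear implicits.

Lemma LdE H N d : Ld H N d = wlat (hole_weight H N d.+2).
Proof. by []. Qed.

Lemma hole_weight_inj H N n :
  (n <= size (nonholes H N))%N -> injective (hole_weight H N n).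
Proof.
move=> n_le i j /eqP; rewrite eqz_nat nth_uniq ?filter_uniq ?iota_uniq //.
- by move/eqP/val_inj.
- exact: leq_trans (ltn_ord i) n_le.
- exact: leq_trans (ltn_ord j) n_le.
Qed.

Lemma nonholesS H N :
  nonholes H N.+1 = nonholes H N ++ (if H N.+1 then [::] else [:: N.+1]).
Proof.
by rewrite /nonholes -[N.+1]addn1 iotaD filter_cat /= add1n addn1; case: (H _).
Qed.

Lemma nonholes_shift H N :
  ~~ H 1%N -> nonholes H N.+1 = 1%N :: map succn (nonholes (shift_holes H) N).
Proof.
move=> nh1; rewrite /nonholes /= nh1 (iotaDl 1 1) filter_map.
by congr (_ :: map _ _); apply: eq_map.
Qed.

Lemma nth_nonholes_shift H N k :
  ~~ H 1%N -> (k.+1 < size (nonholes H N))%N ->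
  nth 0%N (nonholes H N) k.+1 = (nth 0%N (nonholes (shift_holes H) N) k).+1.
Proof.
move=> nh1 k_lt.
have sizeE := congr1 size (nonholes_shift N nh1).
rewrite nonholesS size_cat /= size_map in sizeE.
have -> : nth 0%N (nonholes H N) k.+1 = nth 0%N (nonholes H N.+1) k.+1.
  by rewrite nonholesS nth_cat k_lt.
rewrite nonholes_shift //= (nth_map 0%N) //.
by move: sizeE k_lt; case: (H _) => /=; lia.
Qed.

Theorem proposition4p1 (d N : nat) (H : pred nat) :
  (1 <= d)%N ->
  ~~ H 1%N ->
  (d.+3 <= size (nonholes H N))%N ->
  perfect (Ld H N d) -> lat_min (Ld H N d) 4 ->
  perfect (Ld (shift_holes H) N d) -> lat_min (Ld (shift_holes H) N d) 4 ->
  (exists x : 'rV[int]_(d.+3), Ld H N d.+1 x /\ vnorm x = 4 /\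
      x 0 ord0 = 1 /\ x 0 ord_max = 1) ->
  perfect (Ld H N d.+1).
Proof.
move=> d_gt0 nh1 sizeN perfA minA perfB minB [x [Lx [nx [x0 xl]]]] M.
rewrite !LdE in perfA minA perfB minB Lx *; move=> /sym_tensor_wlatP[MT MU].
set w := hole_weight H N d.+3; change (mintensor_span (wlat w) M).
have w_inj : injective w by apply: hole_weight_inj.
have x_min : minvec (wlat w) x.
  by apply: minvec_vnorm4 => // y; apply: wlat_vnorm_ge4.
have x_ends : toQ x 0 ord0 * toQ x 0 ord_max != 0.
  by rewrite !mxE x0 xl mulr1 oner_eq0.
have [B BU [B0 Bmax]] := exists_wspace_head0 d_gt0 w_inj.
have [c [P [Q [-> [[PT PU Pmax] [QT QU Q0]]]]]] :=
  sym_split MT MU (iffLR (wlat_toQ _ _) Lx) BU x_ends B0 Bmax.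
rewrite -addrA; apply: mintensor_span_cons x_min _; apply: mintensor_spanD.
- apply: (mintensor_span_compress (h := ord_max) (c := 0) w_inj _ perfA) => // i.
  by rewrite addr0 /w /hole_weight lift_max.
- apply: (mintensor_span_compress (h := ord0) (c := 1) w_inj _ perfB) => // i.
  have i_lt : (i.+1 < size (nonholes H N))%N by have := ltn_ord i; lia.
  by rewrite /w /hole_weight lift0 nth_nonholes_shift // -addn1 PoszD.
Qed.
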